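(* Let $\lambda=(a,b)$ with $a\ge b\ge1$, and let $\mu=(\mu_1,\dots,\mu_M)$ be a content with $\sum_i\mu_i=a+b$ such that $\mu_i=2$ for exactly $m$ indices $i$ and $\mu_i=1$ for the remaining indices (so $M=a+b-m$). Then for every $k\ge0$, $$|S_k(\lambda,\mu)|=\frac{a-b+1+2k}{a+1+k-m}\binom{a+b-2m}{b-k-m}$$ (interpreted as $0$ when $b-k-m<0$).
   Context: The shape $(a,b)$ has $a$ left-justified boxes in row 1 and $b$ in row 2. A filling of shape $\lambda$ and content $\mu$ assigns positive integers to boxes so that value $v$ occurs exactly $\mu_v$ times; row-standard means strictly increasing along rows from left to right. Inversion pairs of a row-standard $\tau$: for a box $c$ and $r\ge1$ let $c^{(r)}$ be the box $r$ positions to its right, if it exists. For distinct boxes $c,c'$ in the same column with $\tau(c)<\tau(c')$, let $r\ge1$ be least such that one of $c^{(r)},c'^{(r)}$ does not exist or both exist with $\tau(c^{(r)})\ne\tau(c'^{(r)})$. $(c,c')$ is an inversion pair if either (one does not exist and $c$ lies below $c'$) or (both exist and $\tau(c^{(r)})>\tau(c'^{(r)})$). $S_k(\lambda,\mu)$: row-standard fillings of shape $\lambda$ and content $\mu$ with exactly $k$ inversion pairs (counted as pairs of boxes, with multiplicity). *)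

From HB Require Import structures.
From mathcomp Require Import all_boot all_order all_algebra.
Set Implicit Arguments. Unset Strict Implicit. Unset Printing Implicit Defensive.

(* A filling of the two-row shape (a,b) is a pair (r1, r2) of sequences:
   r1 = entries of row 1 (top row, a boxes) from left to right,
   r2 = entries of row 2 (bottom row, b boxes) from left to right.
   The box (row i, column j) has its right neighbour at distance r in
   column j + r, which exists iff j + r < length of row i. *)

Definition has_content (mu : seq nat) (r1 r2 : seq nat) : bool :=
  all (fun v => count_mem v (r1 ++ r2) == nth 0 mu v.-1) (iota 1 (size mu)) &&
  all (fun v => 1 <= v <= size mu) (r1 ++ r2).

Definition row_standard (r1 r2 : seq nat) : bool :=
  sorted ltn r1 && sorted ltn r2.

Definition is_filling (a b : nat) (mu : seq nat) (r1 r2 : seq nat) : bool :=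
  [&& size r1 == a, size r2 == b & has_content mu r1 r2].

(* Given the entries strictly to the right of c (sc) and of c' (sc'),
   scan r = 1, 2, ...; c_below tells whether c lies below c'. *)
Fixpoint inv_tail (sc sc' : seq nat) (c_below : bool) : bool :=
  match sc, sc' with
  | [::], _ => c_below
  | _, [::] => c_below
  | u :: sc1, v :: sc1' => if u == v then inv_tail sc1 sc1' c_below else v < u
  end.

(* Is the pair of boxes in column j (both rows) an inversion pair?
   (c, c') must satisfy tau(c) < tau(c'); with two rows the only candidate
   ordered pair in column j < b is determined by which entry is smaller. *)
Definition inv_col (r1 r2 : seq nat) (j : nat) : bool :=
  let x := nth 0 r1 j in
  let y := nth 0 r2 j in
  if x < y then inv_tail (drop j.+1 r1) (drop j.+1 r2) false
  else if y < x then inv_tail (drop j.+1 r2) (drop j.+1 r1) true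
  else false.

Definition num_inv (r1 r2 : seq nat) : nat :=
  count (inv_col r1 r2) (iota 0 (minn (size r1) (size r2))).

Definition in_S (k a b : nat) (mu : seq nat) (r1 r2 : seq nat) : bool :=
  [&& is_filling a b mu r1 r2, row_standard r1 r2 & num_inv r1 r2 == k].

(* All fillings with content mu have entries in 1..size mu, so they are
   enumerated by tuples of ordinals 'I_(size mu).+1. *)
Definition S_card (k a b : nat) (mu : seq nat) : nat :=
  #|[set t : (a.-tuple 'I_(size mu).+1) * (b.-tuple 'I_(size mu).+1) |
      in_S k a b mu (map val t.1) (map val t.2)]|.

From HB Require Import structures.
From mathcomp Require Import all_boot all_order all_algebra.
From mathcomp Require Import zify.
Set Implicit Arguments. Unset Strict Implicit. Unset Printing Implicit Defensive.
Import GRing.Theory Num.Theory.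

(* Build the row-standard fillings by inserting the values in increasing order:
   the largest value M, of multiplicity 1 or 2, ends one row or both.  Reading
   the columns from the left, an inversion is decided by the next column with
   distinct entries, so appending M changes the inversion count only through
   the newly completed column, if any.  This gives Pascal-like recursions for
   the number of fillings of shape (a, b) with k inversions, which are also
   satisfied by the ballot differences C(A+B, B-k) - C(A+B, B-k-1) with
   A = a - m and B = b - m: a value of multiplicity 2 only shortens both rows.
   The closed form follows from (p+1) C(n, p+1) = (n-p) C(n, p). *)

(** * Inversions of a sequence of columns *)

(* [s] lists the columns (top, bottom) of the two-row part of a filling.  A
   column with distinct entries is an inversion iff the next column with
   distinct entries is ordered the other way; if there is none, [dflt] plays
   its role: [true] is the rule of [inv_col], [false] the rule once the two
   rows are exchanged. *)
Fixpoint first_lt (dflt : bool) (s : seq (nat * nat)) : bool :=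
  if s is q :: s' then (if q.1 == q.2 then first_lt dflt s' else q.1 < q.2)
  else dflt.

Fixpoint inversions (dflt : bool) (s : seq (nat * nat)) : nat :=
  if s is p :: s' then
    ((p.1 != p.2) && (first_lt dflt s' != (p.1 < p.2))) + inversions dflt s'
  else 0.

Lemma zip_swap (S T : Type) (u : seq S) (v : seq T) :
  zip v u = map swap_pair (zip u v).
Proof. by elim: u v => [|x u IH] [|y v] //=; rewrite IH. Qed.

Lemma first_lt_swap e s : first_lt e (map swap_pair s) = ~~ first_lt (~~ e) s.
Proof.
elim: s => [|[x y] s IH] /=; first by rewrite negbK.
by rewrite eq_sym; case: ltngtP.
Qed.

Lemma inversions_swap e s : inversions e (map swap_pair s) = inversions (~~ e) s.
Proof.
elim: s => [|[x y] s IH] //=; rewrite IH first_lt_swap eq_sym.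
by case: ltngtP => //=; case: first_lt.
Qed.

Lemma inv_tail_zip u v c : inv_tail u v c = first_lt c (zip v u).
Proof. by elim: u v => [|x u IH] [|y v] //=; rewrite IH eq_sym; case: eqP. Qed.

Lemma num_inv_zip r1 r2 : num_inv r1 r2 = inversions true (zip r1 r2).
Proof.
elim: r1 r2 => [|x r1 IH] [|y r2] //.
rewrite /num_inv /= minnSS /= -IH /num_inv (iotaDl 1 0) count_map /inv_col /=.
rewrite !drop0 !inv_tail_zip zip_swap first_lt_swap /=.
by case: ltngtP => //=; case: first_lt.
Qed.

Lemma first_lt_rcons e s p :
  first_lt e (rcons s p) = first_lt (if p.1 == p.2 then e else p.1 < p.2) s.
Proof. by elim: s => [|q s IH] //=; rewrite IH. Qed.

Lemma inversions_rcons e s p :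
  inversions e (rcons s p) = inversions (if p.1 == p.2 then e else p.1 < p.2) s
    + ((p.1 != p.2) && (e != (p.1 < p.2))).
Proof.
elim: s => [|q s IH] /=; first by rewrite addn0.
by rewrite IH first_lt_rcons addnA.
Qed.

Lemma zip_rcons_long (S T : Type) (s : seq S) (t : seq T) x :
  size t <= size s -> zip (rcons s x) t = zip s t.
Proof. by elim: s t => [|y s IH] [|z t] //= lt; rewrite IH. Qed.

Lemma zip_rcons_short (S T : Type) (s : seq S) (t : seq T) x z0 :
  size s < size t -> zip (rcons s x) t = rcons (zip s t) (x, nth z0 t (size s)).
Proof. by elim: s t => [|y s IH] [|z t] //= lt; rewrite ?IH //; case: t lt. Qed.

Lemma inversions_zip_rcons_max e u v M : all (fun y => y < M) v ->
  inversions e (zip (rcons u M) v)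
    = if size u < size v then inversions false (zip u v) + e
      else inversions e (zip u v).
Proof.
move=> v_lt; case: ltnP => [lt|le]; last by rewrite zip_rcons_long.
have v_M : nth 0 v (size u) < M by apply: (allP v_lt); rewrite mem_nth.
rewrite (zip_rcons_short _ 0 lt) inversions_rcons /=.
rewrite gtn_eqF // ltnNge ltnW //=; by case: e.
Qed.

Lemma inversions_zip_rconsr_max e u v M : all (fun y => y < M) u ->
  inversions e (zip u (rcons v M))
    = if size v < size u then inversions true (zip u v) + ~~ e
      else inversions e (zip u v).
Proof.
move=> u_lt; rewrite zip_swap inversions_swap inversions_zip_rcons_max //.
by rewrite zip_swap !inversions_swap negbK.
Qed.

Lemma inversions_zip_rcons2_max e u v M : all (fun y => y < M) u ->
  size v <= size u ->
  inversions e (zip (rcons u M) (rcons v M))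
    = if size v < size u then inversions true (zip u v) + ~~ e
      else inversions e (zip u v).
Proof.
move=> u_lt; rewrite leq_eqVlt => /orP[/eqP uv | lt].
  by rewrite zip_rcons // inversions_rcons eqxx ltnn addn0 uv ltnn.
by rewrite zip_rcons_long ?size_rcons // inversions_zip_rconsr_max // lt.
Qed.

(** * Row-standard fillings *)

Definition mult (mu : seq nat) (v : nat) : nat := nth 0 (0 :: mu) v.

Lemma mult_out mu v : size mu < v -> mult mu v = 0.
Proof. by move=> lt; rewrite /mult nth_default. Qed.

Lemma mult_rcons mu x v :
  mult (rcons mu x) v = if v == (size mu).+1 then x else mult mu v.
Proof.
rewrite /mult -rcons_cons nth_rcons /=.
case: ltngtP => // lt; by rewrite nth_default // ltnW.
Qed.

Lemma has_contentP mu r1 r2 :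
  reflect (forall v, count_mem v (r1 ++ r2) = mult mu v) (has_content mu r1 r2).
Proof.
apply: (iffP andP) => [[/allP mu_cnt /allP r_bnd] v | cnt_mu].
  have [v_in|v_out] := boolP (v \in iota 1 (size mu)).
    by case: v v_in => [|v] v_in; [rewrite mem_iota in v_in | exact/eqP/mu_cnt].
  rewrite mem_iota in v_out.
  have -> : mult mu v = 0 by case: v v_out => // v ?; rewrite mult_out //; lia.
  by apply/count_memPn; apply: contra v_out => /r_bnd; lia.
split; apply/allP => v.
  by rewrite mem_iota => v_in; rewrite cnt_mu; case: v v_in.
apply: contraLR => v_out; apply/count_memPn; rewrite cnt_mu.
by case: v v_out => // v ?; rewrite mult_out //; lia.
Qed.

Lemma has_content_bounded mu r1 r2 :
  has_content mu r1 r2 -> all (fun v => v < (size mu).+1) (r1 ++ r2).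
Proof. by case/andP => _; apply: sub_all => v /andP[]. Qed.

Lemma sorted_ltn_rcons (t : seq nat) y :
  sorted ltn (rcons t y) = all (fun v => v < y) t && sorted ltn t.
Proof.
by rewrite !(sorted_pairwise ltn_trans) -cats1 pairwise_cat allrel1r /= andbT.
Qed.

Lemma sorted_ltn_push (t : seq nat) (c : bool) M :
  all (fun v => v < M) t -> sorted ltn (t ++ nseq c M) = sorted ltn t.
Proof. by case: c => t_lt //=; rewrite ?cats0 // cats1 sorted_ltn_rcons t_lt. Qed.

Lemma sorted_ltn_split_max (r : seq nat) M :
  sorted ltn r -> all (fun v => v <= M) r ->
  exists t (c : bool), all (fun v => v < M) t /\ r = t ++ nseq c M.
Proof.
case/lastP: r => [|t y]; first by exists [::], false.
rewrite sorted_ltn_rcons all_rcons => /andP[t_lt _] /andP[y_le _].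
have [->|y_ne] := eqVneq M y; first by exists t, true; rewrite cats1.
exists (rcons t y), false; rewrite cats0 all_rcons ltn_neqAle eq_sym y_ne y_le.
by split=> //; apply: sub_all t_lt => v; lia.
Qed.

Lemma has_content_push mu x t1 t2 (c1 c2 : bool) (M := (size mu).+1) :
  all (fun v => v < M) (t1 ++ t2) ->
  has_content (rcons mu x) (t1 ++ nseq c1 M) (t2 ++ nseq c2 M)
    = has_content mu t1 t2 && (c1 + c2 == x).
Proof.
move=> t_lt.
have cnt v : count_mem v ((t1 ++ nseq c1 M) ++ t2 ++ nseq c2 M)
    = count_mem v (t1 ++ t2) + (v == M) * (c1 + c2).
  by rewrite !count_cat !count_nseq /= [M == v]eq_sym; lia.
have cntM : count_mem M (t1 ++ t2) = 0.
  by apply/count_memPn/negP => /(allP t_lt); rewrite ltnn.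
apply/has_contentP/andP => [mu_cnt | [/has_contentP mu_cnt /eqP <-] v].
  split; last by have := mu_cnt M; rewrite cnt cntM mult_rcons eqxx mul1n => /eqP.
  apply/has_contentP => v; have := mu_cnt v; rewrite cnt mult_rcons.
  have [-> _|_] := eqVneq v M; first by rewrite cntM mult_out.
  by rewrite mul0n addn0.
rewrite cnt mult_rcons mu_cnt.
by have [->|_] := eqVneq v M; rewrite ?mul0n ?addn0 // mult_out // mul1n.
Qed.

Definition bool_pairs : seq (bool * bool) :=
  [:: (false, false); (true, false); (false, true); (true, true)].

Definition splits (x : nat) : seq (bool * bool) :=
  [seq c : bool * bool <- bool_pairs | c.1 + c.2 == x].

Definition push_max (M : nat) (c : bool * bool) (p : seq nat * seq nat) :=
  (p.1 ++ nseq c.1 M, p.2 ++ nseq c.2 M).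

(* The largest value M, of multiplicity x, ends c.1 + c.2 = x of the rows. *)
Fixpoint fillings_rev (r : seq nat) : seq (seq nat * seq nat) :=
  if r is x :: r' then
    [seq push_max (size r').+1 c p | c <- splits x, p <- fillings_rev r']
  else [:: ([::], [::])].

Definition fillings (mu : seq nat) := fillings_rev (rev mu).

Lemma fillings_rcons mu x :
  fillings (rcons mu x)
    = [seq push_max (size mu).+1 c p | c <- splits x, p <- fillings mu].
Proof. by rewrite /fillings rev_rcons /= size_rev. Qed.

Lemma mem_splits x c : (c \in splits x) = (c.1 + c.2 == x).
Proof. by rewrite mem_filter andbC; case: c => [[] []]. Qed.

Lemma mem_fillings mu r1 r2 :
  ((r1, r2) \in fillings mu) = row_standard r1 r2 && has_content mu r1 r2.
Proof.
elim/last_ind: mu r1 r2 => [|mu x IH] r1 r2.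
  rewrite mem_seq1 xpair_eqE /row_standard /has_content /=.
  by case: r1 r2 => [|v ?] [|w ?]; rewrite //= lt0n leqn0 andNb !andbF.
rewrite fillings_rcons; apply/allpairsP/idP => [[[c [t1 t2]]] | ].
  rewrite /= mem_splits IH => -[c_x /andP[/andP[st1 st2] t_cnt] [-> ->]].
  have t_lt := has_content_bounded t_cnt.
  move: (t_lt); rewrite all_cat => /andP[lt1 lt2].
  rewrite has_content_push // t_cnt c_x /row_standard.
  by rewrite !sorted_ltn_push // st1 st2.
case/andP => /andP[s1 s2] r_cnt.
have := has_content_bounded r_cnt; rewrite size_rcons all_cat => /andP[b1 b2].
have [t1 [c1 [lt1 r1E]]] := sorted_ltn_split_max s1 b1.
have [t2 [c2 [lt2 r2E]]] := sorted_ltn_split_max s2 b2.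
move: s1 s2 r_cnt; rewrite r1E r2E !sorted_ltn_push //.
rewrite has_content_push ?all_cat ?lt1 //.
move=> s1 s2 /andP[t_cnt c_x]; exists ((c1, c2), (t1, t2)).
by rewrite /= mem_splits IH /row_standard s1 s2 t_cnt c_x.
Qed.

Lemma fillings_bounded mu p :
  p \in fillings mu -> all (fun v => v < (size mu).+1) (p.1 ++ p.2).
Proof. by case: p => r1 r2; rewrite mem_fillings => /andP[_ /has_content_bounded]. Qed.

Lemma push_row_inj M (t t' : seq nat) (c c' : bool) :
  all (fun v => v < M) t -> all (fun v => v < M) t' ->
  t ++ nseq c M = t' ++ nseq c' M -> c = c' /\ t = t'.
Proof.
have mem_M (s : seq nat) (b : bool) :
    all (fun v => v < M) s -> (M \in s ++ nseq b M) = b.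
  move=> s_lt; have M_s : M \in s = false by apply/negP => /(allP s_lt); rewrite ltnn.
  by rewrite mem_cat mem_nseq M_s eqxx andbT lt0b.
move=> t_lt t'_lt e; have ec : c = c' by rewrite -(mem_M t c) // e mem_M.
split=> //; subst c'; case: c e; last by rewrite !cats0.
by rewrite !cats1 => /rcons_inj[].
Qed.

Lemma push_max_inj M c c' p p' :
  all (fun v => v < M) (p.1 ++ p.2) -> all (fun v => v < M) (p'.1 ++ p'.2) ->
  push_max M c p = push_max M c' p' -> (c, p) = (c', p').
Proof.
case: c c' p p' => [c1 c2] [c1' c2'] [t1 t2] [t1' t2'].
rewrite !all_cat => /andP[lt1 lt2] /andP[lt1' lt2'].
case=> /push_row_inj e1 /push_row_inj e2.
by case: (e1 lt1 lt1') (e2 lt2 lt2') => -> -> [-> ->].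
Qed.

Lemma uniq_fillings mu : uniq (fillings mu).
Proof.
elim/last_ind: mu => [|mu x IH] //; rewrite fillings_rcons allpairs_uniq //.
  by rewrite filter_uniq.
move=> [c p] [c' p'] /allpairsP[[? ?] /= [_ p_in [-> ->]]].
move=> /allpairsP[[? ?] /= [_ p'_in [-> ->]]] /push_max_inj; apply.
  exact: fillings_bounded p_in.
exact: fillings_bounded p'_in.
Qed.

Lemma count_pred1_2_le_size mu p :
  p \in fillings mu -> count (pred1 2) mu <= size p.2.
Proof.
elim/last_ind: mu p => [|mu x IH] p //.
rewrite fillings_rcons => /allpairsP[[c q] /= [c_x q_in ->]].
rewrite -cats1 count_cat size_cat size_nseq /=.
have := IH q q_in.
by case: c c_x => [[] []]; rewrite mem_splits /= => /eqP <-; lia.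
Qed.

(** * Counting fillings by inversions *)

Definition nfill (mu : seq nat) (a b k : nat) (e : bool) : nat :=
  count (fun p => [&& size p.1 == a, size p.2 == b
                    & inversions e (zip p.1 p.2) == k]) (fillings mu).

Lemma S_card_nfill mu k a b : S_card k a b mu = nfill mu a b k true.
Proof.
rewrite /S_card cardE /nfill -size_filter.
pose rows (t : a.-tuple 'I_(size mu).+1 * b.-tuple 'I_(size mu).+1) :=
  (map val t.1, map val t.2).
have rows_inj : injective rows.
  move=> [t1 t2] [s1 s2] [/(inj_map val_inj) e1 /(inj_map val_inj) e2].
  by congr pair; apply: val_inj.
rewrite -(size_map rows); apply/perm_size/uniq_perm.
- by rewrite map_inj_uniq ?enum_uniq.
- by rewrite filter_uniq ?uniq_fillings.
move=> [r1 r2]; rewrite mem_filter mem_fillings /=; apply/mapP/idP.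
  move=> [t]; rewrite mem_enum inE /in_S.
  move=> /and3P[/and3P[ra rb r_cnt] r_std r_k].
  by case=> -> ->; rewrite ra rb -num_inv_zip r_k r_std r_cnt.
case/andP=> /and3P[/eqP r1a /eqP r2b r_k] /andP[r_std r_cnt].
have := has_content_bounded r_cnt; rewrite all_cat => /andP[r1_lt r2_lt].
have val_inord r : all (fun v => v < (size mu).+1) r ->
    map val (map (@inord (size mu)) r) = r.
  by move=> r_le; rewrite -map_comp map_id_in // => v /(allP r_le) /inordK.
have sz1 : size (map (@inord (size mu)) r1) == a by rewrite size_map r1a.
have sz2 : size (map (@inord (size mu)) r2) == b by rewrite size_map r2b.
exists (Tuple sz1, Tuple sz2); last by rewrite /rows /= !val_inord.
rewrite mem_enum inE /in_S /is_filling /= !val_inord //.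
by rewrite r1a r2b r_cnt r_std num_inv_zip r_k !eqxx.
Qed.

Lemma count_allpairs (S T R : Type) (f : S -> T -> R) (P : pred R) s t :
  count P [seq f x y | x <- s, y <- t]
    = sumn [seq count (fun y => P (f x y)) t | x <- s].
Proof.
rewrite count_flatten -map_comp; congr sumn.
by apply: eq_map => x /=; rewrite count_map.
Qed.

Lemma has_contentC mu r1 r2 : has_content mu r1 r2 = has_content mu r2 r1.
Proof.
have perm_r : perm_eq (r1 ++ r2) (r2 ++ r1) by rewrite perm_catC.
rewrite /has_content (perm_all _ perm_r); congr andb.
by apply: eq_all => v; rewrite (permP perm_r).
Qed.

Lemma mem_fillings_swap mu p : (swap_pair p \in fillings mu) = (p \in fillings mu).
Proof.
case: p => r1 r2; rewrite /= !mem_fillings /row_standard has_contentC.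
by rewrite [sorted _ r2 && _]andbC.
Qed.

Lemma nfill_swap mu a b k e : nfill mu a b k e = nfill mu b a k (~~ e).
Proof.
have perm_swap : perm_eq (map swap_pair (fillings mu)) (fillings mu).
  apply: uniq_perm; rewrite ?uniq_fillings //.
    by rewrite (map_inj_uniq (can_inj swap_pairK)) uniq_fillings.
  move=> p; apply/mapP/idP => [[q q_in ->] | p_in].
    by rewrite mem_fillings_swap.
  by exists (swap_pair p); rewrite ?mem_fillings_swap ?swap_pairK.
rewrite /nfill -(permP perm_swap) count_map; apply: eq_count => -[u v] /=.
by rewrite zip_swap inversions_swap andbCA.
Qed.

Lemma nfill_small mu a b k e : b < count (pred1 2) mu -> nfill mu a b k e = 0.
Proof.
move=> lt_b; apply/eqP; rewrite -leqn0 leqNgt -has_count; apply/hasPn => p p_in /=.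
apply: contraTN lt_b => /and3P[_ /eqP <- _].
by rewrite -leqNgt count_pred1_2_le_size.
Qed.

Lemma nfill_rcons2 mu a b k : b <= a ->
  nfill (rcons mu 2) a.+1 b.+1 k true = nfill mu a b k true.
Proof.
move=> le_ba; rewrite /nfill fillings_rcons count_allpairs /= addn0.
apply: eq_in_count => -[u v] /fillings_bounded; rewrite all_cat => /andP[u_lt _].
rewrite /= !cats1 !size_rcons !eqSS.
case: (size u =P a) => //= ua; case: (size v =P b) => //= vb.
by rewrite inversions_zip_rcons2_max // ua vb //; case: ifP; rewrite ?addn0.
Qed.

Lemma nfill_rcons1 mu a b k : b <= a ->
  nfill (rcons mu 1) a.+1 b k true
    = nfill mu a b k true + (if b is b'.+1 then nfill mu a.+1 b' k true else 0).
Proof.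
move=> le_ba; rewrite /nfill fillings_rcons count_allpairs /= addn0; congr (_ + _).
  apply: eq_in_count => -[u v] /fillings_bounded; rewrite all_cat => /andP[_ v_lt].
  rewrite /= cats0 cats1 size_rcons eqSS.
  case: (size u =P a) => //= ua; case: (size v =P b) => //= vb.
  by rewrite inversions_zip_rcons_max // ua vb ltnNge le_ba.
case: b le_ba => [|b] le_ba.
  rewrite (eq_count (a2 := pred0)) ?count_pred0 // => p /=.
  by rewrite cats1 size_rcons /= andbF.
apply: eq_in_count => -[u v] /fillings_bounded; rewrite all_cat => /andP[u_lt _].
rewrite /= cats0 cats1 size_rcons eqSS.
case: (size u =P a.+1) => //= ua; case: (size v =P b) => //= vb.
by rewrite inversions_zip_rconsr_max // ua vb; case: ifP; rewrite ?addn0.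
Qed.

Lemma nfill_rcons1_diag mu a k :
  nfill (rcons mu 1) a.+1 a.+1 k true
    = nfill mu a.+1 a k true
      + (if k is k'.+1 then nfill mu a.+1 a k' true else 0).
Proof.
rewrite /nfill fillings_rcons count_allpairs /= addn0 addnC; congr (_ + _).
  apply: eq_in_count => -[u v] /fillings_bounded; rewrite all_cat => /andP[u_lt _].
  rewrite /= cats0 cats1 size_rcons eqSS.
  case: (size u =P a.+1) => //= ua; case: (size v =P a) => //= va.
  by rewrite inversions_zip_rconsr_max // ua va ltnSn addn0.
rewrite (eq_in_count (a2 := fun p => [&& size p.1 == a, size p.2 == a.+1
                        & (inversions false (zip p.1 p.2)).+1 == k]));
  last first.
  move=> [u v] /fillings_bounded; rewrite all_cat => /andP[_ v_lt].
  rewrite /= cats0 cats1 size_rcons eqSS.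
  case: (size u =P a) => //= ua; case: (size v =P a.+1) => //= va.
  by rewrite inversions_zip_rcons_max // ua va ltnSn addn1.
case: k => [|k]; last by rewrite -[RHS]/(nfill mu a.+1 a k true) nfill_swap.
by rewrite (eq_count (a2 := pred0)) ?count_pred0 // => p /=; rewrite !andbF.
Qed.

(** * Ballot numbers *)

Section Ballot.
Local Open Scope ring_scope.

Definition binz (n : nat) (j : int) : int :=
  if j is Posz j then ('C(n, j))%:Z else 0.

Definition ballot (A B k : nat) : int :=
  binz (A + B)%N (B%:Z - k%:Z) - binz (A + B)%N (B%:Z - k%:Z - 1).

Lemma binzS n (j : int) : binz n.+1 j = binz n j + binz n (j - 1).
Proof.
case: j => [[|j]|j].
- by rewrite (_ : Posz 0 - 1 = Negz 0) //= !bin0 addr0.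
- by rewrite (_ : Posz j.+1 - 1 = Posz j) /= ?binS ?PoszD 1?addrC //; lia.
- by rewrite (_ : Negz j - 1 = Negz j.+1) //; lia.
Qed.

Lemma ballot_pascal A B k : ballot A B.+1 k + ballot A.+1 B k = ballot A.+1 B.+1 k.
Proof.
rewrite /ballot !addSn !addnS.
rewrite (_ : B.+1%:Z - k%:Z = (B%:Z - k%:Z) + 1); last lia.
rewrite !binzS addrK; lia.
Qed.

Lemma ballot_B0 A k : ballot A 0 k = (k == 0)%:Z.
Proof. by rewrite /ballot addn0; case: k => [|k] //=; rewrite addn0 bin0 subr0. Qed.

Lemma ballot_gt A B k : (B < k)%N -> ballot A B k = 0.
Proof.
move=> lt_Bk; rewrite /ballot.
by rewrite (_ : B%:Z - k%:Z = Negz (k - B)%N.-1) /= ?subr0 //; lia.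
Qed.

Lemma ballot_diag A k :
  ballot A.+1 A k + (if k is k'.+1 then ballot A.+1 A k' else 0)
    = ballot A.+1 A.+1 k.
Proof.
rewrite /ballot !addSn !addnS; case: k => [|k].
  have binC : 'C((A + A).+1, A.+1) = 'C((A + A).+1, A).
    have sub_A : ((A + A).+1 - A = A.+1)%N by rewrite subSn ?addnK ?leq_addr.
    by rewrite -[in LHS]sub_A bin_sub // ltnW // ltnS leq_addr.
  rewrite addr0 !subr0 (_ : A.+1%:Z - 1 = A%:Z); last lia.
  by rewrite !(binzS (A + A).+1) /= binC subSS subn0; lia.
rewrite (_ : A%:Z - k.+1%:Z = (A%:Z - k%:Z) - 1); last lia.
rewrite (_ : A.+1%:Z - k.+1%:Z = A%:Z - k%:Z); last lia.
rewrite !(binzS (A + A).+1); lia.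
Qed.

Lemma ballotE (R : numFieldType) A B k : (B <= A)%N -> (k <= B)%N ->
  (ballot A B k)%:~R
    = (A - B + 1 + 2 * k)%:R / (A + 1 + k)%:R * ('C(A + B, B - k))%:R :> R.
Proof.
move=> le_BA le_kB.
have Y_neq0 : (A + 1 + k)%:R != 0 :> R by rewrite pnatr_eq0; lia.
rewrite /ballot (_ : B%:Z - k%:Z = Posz (B - k)); last lia.
case eBk : (B - k)%N => [|p].
  rewrite (_ : Posz 0 - 1 = Negz 0) //= bin0 subr0 mulr1.
  by rewrite (_ : (A - B + 1 + 2 * k = A + 1 + k)%N) ?divff //; lia.
rewrite (_ : Posz p.+1 - 1 = Posz p) /= ?intrB; last lia.
have bin_p :
    'C(A + B, p)%:R = p.+1%:R * 'C(A + B, p.+1)%:R / (A + 1 + k)%:R :> R.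
  rewrite -natrM mul_bin_left (_ : (A + B - p = A + 1 + k)%N); last lia.
  by rewrite natrM [(A + 1 + k)%:R * _]mulrC mulfK.
rewrite -!pmulrn bin_p.
rewrite (_ : (A - B + 1 + 2 * k = (A + 1 + k) - p.+1)%N) ?natrB; [|lia|lia].
by rewrite mulrBl divff // mulrBl mul1r mulrAC.
Qed.

End Ballot.

Lemma count_pred1_2_sumn (s : seq nat) : 2 * count (pred1 2) s <= sumn s.
Proof. by elim: s => //= x s IH; case: eqP => [->|_]; lia. Qed.

Lemma nfill_ballot mu a b k (m := count (pred1 2) mu) :
  all (fun x => (x == 1) || (x == 2)) mu ->
  b <= a -> a + b = sumn mu -> m <= b ->
  Posz (nfill mu a b k true) = ballot (a - m) (b - m) k.
Proof.
rewrite {}/m; elim/last_ind: mu a b k => [|mu x IH] a b k.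
  move=> _ le_ba /= ab0 _; have [-> ->] : a = 0 /\ b = 0 by lia.
  by rewrite /nfill ballot_B0 /= eq_sym; case: eqP.
rewrite all_rcons sumn_rcons => /andP[x12 mu12] le_ba.
have -> : count (pred1 2) (rcons mu x) = count (pred1 2) mu + (x == 2).
  by rewrite -cats1 count_cat /= addn0.
have m2 := count_pred1_2_sumn mu; set m := count (pred1 2) mu in IH m2 *.
case/orP: x12 => /eqP -> ab m_b; rewrite /= ?addn0 ?addn1 in m_b *; last first.
  case: a b le_ba ab m_b => [|a] [|b] le_ba ab m_b; try lia.
  by rewrite nfill_rcons2 // (IH a b k) ?subSS //; lia.
case: a le_ba ab => [|a] le_ba ab; first lia.
have [le_ba' | lt_ab] := leqP b a.
  have ab' : a + b = sumn mu by lia.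
  rewrite nfill_rcons1 // PoszD (IH a b k) //.
  case: b le_ba le_ba' ab ab' m_b => [|b] _ le_ba' ab ab' m_b.
    by rewrite (_ : m = 0) ?subn0 ?ballot_B0 ?addr0 //; lia.
  have [le_mb | lt_bm] := leqP m b.
    have ab'' : a.+1 + b = sumn mu by lia.
    have le_ba1 : b <= a.+1 by lia.
    have eA : (a.+1 - m = (a - m).+1)%N by lia.
    have eB : (b.+1 - m = (b - m).+1)%N by lia.
    by rewrite (IH a.+1 b k) // eA eB ballot_pascal.
  have eB : (b.+1 - m = 0)%N by lia.
  by rewrite nfill_small // addr0 eB !ballot_B0.
have -> : b = a.+1 by lia.
have ab' : a.+1 + a = sumn mu by lia.
have m_a : m <= a by lia.
have eA : (a.+1 - m = (a - m).+1)%N by lia.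
rewrite nfill_rcons1_diag PoszD (IH a.+1 a k) // eA -ballot_diag.
by case: k => [|k]; rewrite ?addr0 // (IH a.+1 a k) // eA.
Qed.

Theorem mainTheorem15 (a b m : nat) (mu : seq nat) (k : nat) :
  b <= a -> 1 <= b ->
  sumn mu = a + b ->
  all (fun x => (x == 1) || (x == 2)) mu ->
  count (pred1 2) mu = m ->
  ((S_card k a b mu)%:R : rat) =
    if k + m <= b then
       (((a - b + 1 + 2 * k)%:R / (a + 1 + k - m)%:R) *
         ('C(a + b - 2 * m, b - k - m))%:R)%R
     else 0%R.
Proof.
move=> le_ba _ mu_ab mu12 m_def; rewrite S_card_nfill.
have [m_b | lt_bm] := leqP m b; last by rewrite -m_def nfill_small ?ifF //; lia.
rewrite pmulrn nfill_ballot ?m_def //.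
have [le_kmb | lt_bkm] := leqP (k + m) b; last by rewrite ballot_gt //; lia.
rewrite ballotE; [|lia|lia].
have -> : (a - m - (b - m) + 1 + 2 * k = a - b + 1 + 2 * k)%N by lia.
have -> : (a - m + 1 + k = a + 1 + k - m)%N by lia.
have -> : (a - m + (b - m) = a + b - 2 * m)%N by lia.
by have -> : (b - m - k = b - k - m)%N by lia.
Qed.
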